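(* Let $q>2$ be a prime power, $m\ge1$, $n=q^m-1=r_1r_2$ with $r_1,r_2>1$, $\gcd(r_1,r_2)=1$ and $r_1=q^a-1$ for some natural number $a$. Let $T=(T_1,T_2):\mathbb{Z}_n\to\mathbb{Z}_{r_1}\times\mathbb{Z}_{r_2}$ be a group isomorphism, let $D^*=\Omega(1)\cup B_1\cup B_2\subseteq\mathbb{Z}_n$ where $\Omega(1)=\{q^i\mid 0\le i<m\}$, $B_1=\{2q^i\mid0\le i<m\}$, $B_2=\{q^i+q^j\mid 0\le i<j<m\}$, let $\overline{D^*}$ be a suitable set of representatives of $D^*$ with $1,2\in\overline{D^*}$, and let $\mathcal{U}$ be a complete set of representatives of the $\sim$-classes of $\overline{D^*}$ with $1,2\in\mathcal{U}$. Then $$|\mathcal{U}|=2+\left|\{C_{r_1}(T_1(e))\mid e\in\mathcal{U}\cap B_2\}\right|=2+\left\lfloor a/2\right\rfloor.$$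
   Context: For integers $x,r$, $C_r(x)=\{xq^i\bmod r\mid i\in\mathbb{N}\}$ is the $q$-cyclotomic coset of $x$ modulo $r$. The $q$-orbit of $(x_1,x_2)\in\mathbb{Z}_{r_1}\times\mathbb{Z}_{r_2}$ is $\{(x_1q^i,x_2q^i)\mid i\in\mathbb{N}\}$. If $D\subseteq\mathbb{Z}_{r_1}\times\mathbb{Z}_{r_2}$ is a union of $q$-orbits, a complete set of representatives $\overline{D}$ of its $q$-orbits is a set of restricted representatives if its projection onto $\mathbb{Z}_{r_1}$ is a complete set of representatives of the $q$-cyclotomic cosets modulo $r_1$ contained in the projection of $D$ onto $\mathbb{Z}_{r_1}$. A complete set of representatives $\overline{D^*}\subseteq D^*$ of the $q$-cyclotomic cosets modulo $n$ in $D^*$ is suitable if $T(\overline{D^*})$ is a set of restricted representatives of the $q$-orbits in $T(D^* )$. On $\overline{D^*}$, $x\sim y$ iff $x\equiv y\pmod{r_1}$. *)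

From mathcomp Require Import all_boot all_order all_algebra.
Unset Printing Implicit Defensive.
Import GRing.Theory.
Local Open Scope ring_scope.

Definition prime_power (q : nat) : Prop :=
  exists p k : nat, prime p /\ q = (p ^ k.+1)%N.

(* q-cyclotomic coset C_r(x) = { x q^i mod r | i in N }, via the orbit of
   multiplication by q (fconnect = reflexive-transitive closure of z |-> z q). *)
Definition qcoset (q r : nat) (x : 'Z_r) : {set 'Z_r} :=
  [set y | fconnect (fun z : 'Z_r => z * q%:R) x y].

Definition qorbit (q r1 r2 : nat) (x : 'Z_r1 * 'Z_r2) : {set 'Z_r1 * 'Z_r2} :=
  [set y | fconnect (fun z : 'Z_r1 * 'Z_r2 => (z.1 * q%:R, z.2 * q%:R)) x y].

Definition complete_reps {T : finType} (cls : T -> {set T}) (D R : {set T}) : Prop :=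
  [/\ R \subset D,
      (forall y, y \in D -> exists2 x, x \in R & cls x = cls y)
    & (forall x x', x \in R -> x' \in R -> cls x = cls x' -> x = x')].

Definition restricted_reps (q r1 r2 : nat) (D R : {set 'Z_r1 * 'Z_r2}) : Prop :=
  complete_reps (qorbit q r1 r2) D R /\
  complete_reps (qcoset q r1) [set x.1 | x in D] [set x.1 | x in R].

Definition suitable (q n r1 r2 : nat) (T : 'Z_n -> 'Z_r1 * 'Z_r2)
  (Dstar Dbar : {set 'Z_n}) : Prop :=
  Dbar \subset Dstar /\ complete_reps (qcoset q n) Dstar Dbar /\
  restricted_reps q r1 r2 (T @: Dstar) (T @: Dbar).

(* x ~ y iff x = y (mod r1); the equivalence class of x *)
Definition simcls (n r1 : nat) (x : 'Z_n) : {set 'Z_n} :=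
  [set y : 'Z_n | ((x : nat) %% r1 == (y : nat) %% r1)%N].

Definition Omega1 (q m n : nat) : {set 'Z_n} := [set (q%:R : 'Z_n) ^+ i | i : 'I_m].
Definition B1 (q m n : nat) : {set 'Z_n} := [set 2%:R * (q%:R : 'Z_n) ^+ i | i : 'I_m].
Definition B2 (q m n : nat) : {set 'Z_n} :=
  [set (q%:R : 'Z_n) ^+ (ij : 'I_m * 'I_m).1 + (q%:R : 'Z_n) ^+ (ij : 'I_m * 'I_m).2
     | ij in [set ij : 'I_m * 'I_m | (ij.1 < ij.2)%N]].
Definition Dstar (q m n : nat) : {set 'Z_n} := Omega1 q m n :|: B1 q m n :|: B2 q m n.

(* The first component T_1 of T is multiplication by the unit u = T_1(1)
   after reduction mod r1, so e ~ e' iff T_1 e = T_1 e', and e |-> C_r1(T_1 e) maps U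
   bijectively onto the cosets C_r1(u x), x in D*.  Modulo r1 = q^a - 1, multiplying by
   q rotates the a base-q digits of a residue, so Omega(1) and B_1 give the cosets of u
   and 2u, and q^i + q^j gives that of u (1 + q^k) with k = (j - i) mod a.  These are
   pairwise distinct except for C(1 + q^k) = C(1 + q^(a-k)), which leaves floor(a/2)
   cosets coming from 0 < k < a. *)

From mathcomp Require Import all_boot all_order all_algebra zify.
Import GRing.Theory.
Local Open Scope ring_scope.

Set Implicit Arguments.
Unset Strict Implicit.
Unset Printing Implicit Defensive.

Lemma expn_mul_ndvd_inj q s t x y : (1 < q)%N -> ~~ (q %| x)%N -> ~~ (q %| y)%N ->
  (q ^ s * x = q ^ t * y)%N -> s = t.
Proof.
move=> q_gt1; wlog le_st : s t x y / (s <= t)%N.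
  move=> hwlog nqx nqy e; case: (leqP s t) => [st|/ltnW ts]; first exact: hwlog st nqx nqy e.
  by symmetry; exact: hwlog ts nqy nqx (esym e).
move=> nqx _; rewrite -(subnKC le_st) expnD -mulnA => /eqP.
rewrite eqn_mul2l expn_eq0 eqn0Ngt (ltnW q_gt1) /= => /eqP.
case: (t - s)%N => [|d x_eq]; first by rewrite addn0.
by move: nqx; rewrite x_eq expnS -mulnA dvdn_mulr.
Qed.

Lemma ndvd_1Dexpn q d : (2 < q)%N -> ~~ (q %| 1 + q ^ d)%N.
Proof.
move=> q_gt2; case: d => [|d].
  by rewrite expn0; apply/negP => /dvdn_leq; lia.
by rewrite addnC expnS dvdn_addr ?dvdn_mulr // dvdn1; lia.
Qed.

Lemma eq_add_expn q i j k l : (2 < q)%N -> (q ^ i + q ^ j = q ^ k + q ^ l)%N ->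
  (i = k /\ j = l) \/ (i = l /\ j = k).
Proof.
move=> q_gt2.
have sorted_case i' j' k' l' : (i' <= j')%N -> (k' <= l')%N ->
    (q ^ i' + q ^ j' = q ^ k' + q ^ l')%N -> i' = k' /\ j' = l'.
  move=> le_ij le_kl; rewrite -(subnKC le_ij) -(subnKC le_kl) !expnD.
  rewrite -{1}[(q ^ i')%N]muln1 -{1}[(q ^ k')%N]muln1 -!mulnDr => e.
  have eik := expn_mul_ndvd_inj (ltnW q_gt2) (ndvd_1Dexpn _ q_gt2) (ndvd_1Dexpn _ q_gt2) e.
  move: e; rewrite -eik => /eqP; rewrite eqn_mul2l expn_eq0 eqn0Ngt.
  rewrite (ltnW (ltnW q_gt2)) eqn_add2l => /eqP /(expnI (ltnW q_gt2)) ->; lia.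
case: (leqP i j) => [ij|/ltnW ji]; case: (leqP k l) => [kl|/ltnW lk] e.
- by left; apply: sorted_case.
- by right; apply: sorted_case; rewrite // e addnC.
- by right; move: (sorted_case _ _ _ _ ji kl); rewrite addnC e => /(_ erefl) [-> ->].
- by left; move: (sorted_case _ _ _ _ ji lk); rewrite addnC e addnC => /(_ erefl) [-> ->].
Qed.

Lemma add_expn_lt_subn1 q a i j : (2 < q)%N -> (1 < a)%N -> (i < a)%N -> (j < a)%N ->
  (q ^ i + q ^ j < q ^ a - 1)%N.
Proof.
move=> q_gt2 a_gt1 ia ja.
have le_pred e : (e < a)%N -> (q ^ e <= q ^ a.-1)%N by move=> ea; rewrite leq_exp2l; lia.
have q_le : (q <= q ^ a.-1)%N by rewrite -[X in (X <= _)%N]expn1 le_pred; lia.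
have -> : (q ^ a = q * q ^ a.-1)%N by rewrite -expnS prednK //; lia.
by move: (le_pred _ ia) (le_pred _ ja); nia.
Qed.

Lemma expn_mod_pred q e : (0 < q)%N -> (q ^ e = 1 %[mod q.-1])%N.
Proof.
case: q => [//|q] _.
by rewrite /= -addn1 -{1}[q]mul1n modnMDXl exp1n.
Qed.

Lemma pred_dvd_expn_subn1 q a : (0 < q)%N -> (q.-1 %| q ^ a - 1)%N.
Proof. by move=> q_gt0; rewrite -eqn_mod_dvd ?expn_gt0 ?q_gt0 // expn_mod_pred. Qed.

Lemma eqZp_nat r x y : (1 < r)%N -> ((x%:R : 'Z_r) == y%:R) = (x == y %[mod r])%N.
Proof. by move=> r_gt1; rewrite -val_eqE /= !val_Zp_nat. Qed.

Lemma natZp_inj r x y : (1 < r)%N -> (x < r)%N -> (y < r)%N -> (x%:R : 'Z_r) = y%:R -> x = y.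
Proof. by move=> r_gt1 xr yr /eqP; rewrite eqZp_nat // !modn_small // => /eqP. Qed.

Lemma qcosetP q r (x y : 'Z_r) :
  reflect (exists k, y = x * q%:R ^+ k) (y \in qcoset q r x).
Proof.
have iter_mulq k : iter k (fun z : 'Z_r => z * q%:R) x = x * q%:R ^+ k.
  by elim: k => [|k IHk] /=; rewrite ?mulr1 // IHk exprSr mulrA.
rewrite inE; apply: (iffP idP) => [xy|[k ->]]; last by rewrite -iter_mulq fconnect_iter.
by exists (findex (fun z : 'Z_r => z * q%:R) x y); rewrite -iter_mulq iter_findex.
Qed.

Section QcosetsModQpowSubn1.

Variables (q a r : nat).
Hypotheses (q_gt2 : (2 < q)%N) (r_def : r = (q ^ a - 1)%N) (r_gt1 : (1 < r)%N).

Local Notation C := (qcoset q r).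
Local Notation Q := (q%:R : 'Z_r).

Lemma period_gt0 : (0 < a)%N.
Proof. by move: r_gt1; rewrite r_def; case: a. Qed.

Lemma qpow_period : Q ^+ a = 1.
Proof.
have qa : (q ^ a = r + 1)%N by rewrite r_def subnK // expn_gt0; lia.
by rewrite -natrX qa natrD pchar_Zp // add0r.
Qed.

Lemma qpow_modn e : Q ^+ e = Q ^+ (e %% a).
Proof. by rewrite {1}(divn_eq e a) exprD exprM exprAC qpow_period expr1n mul1r. Qed.

Lemma qcoset_mulqpow x e : C (x * Q ^+ e) = C x.
Proof.
apply/setP=> y; apply/qcosetP/qcosetP => -[k ->]; first by exists (e + k)%N; rewrite exprD mulrA.
exists (e * a.-1 + k)%N; rewrite -mulrA -exprD addnA -{1}(muln1 e) -mulnDr.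
by rewrite add1n prednK ?period_gt0 // exprD exprM exprAC qpow_period expr1n mul1r.
Qed.

Lemma qcoset_eqP x y : reflect (exists e, y = x * Q ^+ e) (C x == C y).
Proof.
apply: (iffP eqP) => [Cxy|[e ->]]; last by rewrite qcoset_mulqpow.
by apply/qcosetP; rewrite Cxy; apply/qcosetP; exists 0%N; rewrite mulr1.
Qed.

Lemma qcosetMl u x y : u \is a GRing.unit -> (C (u * x) == C (u * y)) = (C x == C y).
Proof.
move=> u_unit; apply/qcoset_eqP/qcoset_eqP => -[e xy]; exists e.
  by apply: (mulrI u_unit); rewrite xy mulrA.
by rewrite xy mulrA.
Qed.

(* Modulo q - 1, which divides r, the left-hand side is 2 and the right-hand side 1. *)
Lemma mul_1Dqpow_neq1 k e : (1 + Q ^+ k) * Q ^+ e != 1.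
Proof.
have -> : (1 + Q ^+ k) * Q ^+ e = ((1 + q ^ k) * q ^ e)%N%:R by rewrite natrM natrD !natrX.
rewrite -[1]/(1%:R) eqZp_nat //.
have q_gt0 : (0 < q)%N by lia.
have dvd_r : (q.-1 %| r)%N by rewrite r_def pred_dvd_expn_subn1.
apply/negP => /eqP /(congr1 (modn^~ q.-1)); rewrite !(modn_dvdm _ dvd_r).
rewrite -modnMm -modnDm !(expn_mod_pred _ q_gt0).
have d_gt1 : (1 < q.-1)%N by lia.
rewrite !(modn_small d_gt1) muln1 modn_mod.
by have [->|d_ne2] := eqVneq q.-1 2%N; last rewrite modn_small; lia.
Qed.

Lemma qcoset_1Dqpow_neq1 k : C (1 + Q ^+ k) != C 1.
Proof. by apply/qcoset_eqP => -[e /eqP]; rewrite eq_sym (negbTE (mul_1Dqpow_neq1 k e)). Qed.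

Lemma eq_add_qpow i j k l : (i < a)%N -> (j < a)%N -> (k < a)%N -> (l < a)%N ->
  Q ^+ i + Q ^+ j = Q ^+ k + Q ^+ l -> (i = k /\ j = l) \/ (i = l /\ j = k).
Proof.
move=> ia ja ka la; have [a_gt1|a_le1] := ltnP 1 a; last by lia.
rewrite -!natrX -!natrD => /(natZp_inj r_gt1).
by rewrite r_def !add_expn_lt_subn1 // => /(_ isT isT) /eq_add_expn; apply.
Qed.

Lemma qcoset_1Dqpow_sym k : (k <= a)%N -> C (1 + Q ^+ k) = C (1 + Q ^+ (a - k)).
Proof.
move=> ka; apply/eqP/qcoset_eqP; exists (a - k)%N.
by rewrite mulrDl mul1r -exprD subnKC // qpow_period addrC.
Qed.

Lemma qcoset_1Dqpow_inj k l : (k < a)%N -> (l < a)%N ->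
  C (1 + Q ^+ k) = C (1 + Q ^+ l) -> l = k \/ (k + l = a)%N.
Proof.
move=> ka la /eqP/qcoset_eqP [e]; rewrite [Q ^+ e]qpow_modn.
have : (e %% a < a)%N by rewrite ltn_pmod ?period_gt0.
move: (e %% a)%N => {}e ea; rewrite mulrDl mul1r -exprD -{1}(expr0 Q).
have [lt|ge] := ltnP (k + e) a; first by move/eq_add_qpow => /(_ period_gt0 la ea lt); lia.
rewrite -(subnK ge) exprD qpow_period mulr1 => /eq_add_qpow.
by move=> /(_ period_gt0 la ea ltac:(lia)); lia.
Qed.

Lemma card_qcoset_1Dqpow u : u \is a GRing.unit ->
  #|[set C (u * (1 + Q ^+ k)) | k : 'I_a & (0 < k)%N]| = (a %/ 2)%N.
Proof.
move=> u_unit; pose f k := C (u * (1 + Q ^+ k)).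
have f_sym k : (k <= a)%N -> f k = f (a - k)%N.
  by move=> ka; apply/eqP; rewrite /f qcosetMl // qcoset_1Dqpow_sym.
have f_inj k l : (k < a)%N -> (l < a)%N -> f k = f l -> l = k \/ (k + l = a)%N.
  by move=> ka la /eqP; rewrite /f qcosetMl // => /eqP; apply: qcoset_1Dqpow_inj.
have -> : [set f k | k : 'I_a & (0 < k)%N] = [set f k.+1 | k : 'I_(a %/ 2)].
  apply/setP => S; apply/imsetP/imsetP => -[k]; last first.
    move=> _ ->; have ka : (k.+1 < a)%N by have := ltn_ord k; lia.
    by exists (Ordinal ka); rewrite ?inE.
  rewrite inE => k_gt0 ->; have [k_le|k_gt] := leqP k (a %/ 2).
    have kh : (k.-1 < a %/ 2)%N by lia.
    by exists (Ordinal kh); rewrite //= prednK.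
  have kh : ((a - k).-1 < a %/ 2)%N by have := ltn_ord k; lia.
  by exists (Ordinal kh); rewrite //= prednK ?subn_gt0 // f_sym // ltnW.
rewrite card_imset ?card_ord // => k l f_kl; apply: ord_inj.
have kh := ltn_ord k; have lh := ltn_ord l.
by have := f_inj k.+1 l.+1 ltac:(lia) ltac:(lia) f_kl; lia.
Qed.

End QcosetsModQpowSubn1.

Section AdditiveOnZp.

Variables (n : nat) (R : nzRingType) (f : 'Z_n -> R).
Hypothesis f_add : forall x y, f (x + y) = f x + f y.

Lemma additive_Zp_natr k : f k%:R = f 1 * k%:R.
Proof.
have f0 : f 0 = 0 by apply/(addrI (f 0)); rewrite -f_add !addr0.
elim: k => [|k IHk]; first by rewrite mulr0 f0.
by rewrite -addn1 !natrD f_add IHk mulrDr mulr1 addrC.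
Qed.

Lemma additive_Zp z : f z = f 1 * (z : nat)%:R.
Proof. by rewrite -additive_Zp_natr natr_Zp. Qed.

End AdditiveOnZp.

Lemma additive_Zp_unit n (R : comUnitRingType) (f : 'Z_n -> R) :
  (forall x y, f (x + y) = f x + f y) -> (exists z, f z = 1) -> f 1 \is a GRing.unit.
Proof.
by move=> f_add [z fz]; apply/unitrPr; exists (z : nat)%:R; rewrite -additive_Zp.
Qed.

Section CompleteReps.

Variables (T X : finType) (cls : T -> {set T}) (g : T -> X) (D R : {set T}).
Hypotheses (cls_g : forall x y, cls x = cls y <-> g x = g y) (reps : complete_reps cls D R).

Lemma complete_reps_inj : {in R &, injective g}.
Proof. by case: reps => _ _ cls_inj x y xR yR /cls_g; apply: cls_inj. Qed.

Lemma complete_reps_imset : g @: R = g @: D.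
Proof.
case: reps => /subsetP sRD cover _; apply/setP => y; apply/imsetP/imsetP => -[x xD ->].
  by exists x => //; apply: sRD.
by have [x' x'R /cls_g eq_g] := cover x xD; exists x'.
Qed.

End CompleteReps.

Lemma B2_natr q m n b : (2 < q)%N -> n = (q ^ m - 1)%N -> b \in B2 q m n ->
  exists2 x, b = x%:R & (2 < x < n)%N.
Proof.
move=> q_gt2 n_def /imsetP [[i j]]; rewrite inE /= => ij ->.
exists (q ^ i + q ^ j)%N; first by rewrite natrD !natrX.
have qj : (q <= q ^ j)%N by rewrite -{1}(expn1 q) leq_exp2l; lia.
rewrite n_def add_expn_lt_subn1 ?andbT //; first by have := expn_gt0 q i; lia.
by have := ltn_ord j; lia.
Qed.

Lemma B2_notin_small q m n x : (2 < q)%N -> n = (q ^ m - 1)%N -> (x <= 2)%N ->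
  x%:R \notin B2 q m n.
Proof.
move=> q_gt2 n_def x_le2; apply/negP => /(B2_natr q_gt2 n_def) [y /esym xy /andP [y_gt2 y_lt]].
by have := natZp_inj (_ : 1 < n)%N y_lt (_ : x < n)%N xy; lia.
Qed.

Section ClassesOfDstar.

Variables (q m a n r1 : nat) (f : 'Z_n -> 'Z_r1) (Dbar U : {set 'Z_n}).
Hypotheses (q_gt2 : (2 < q)%N) (m_gt0 : (0 < m)%N) (n_def : n = (q ^ m - 1)%N)
  (r1_def : r1 = (q ^ a - 1)%N) (r1_gt1 : (1 < r1)%N) (r1_dvd_n : (r1 %| n)%N).
Hypotheses (f_add : forall x y, f (x + y) = f x + f y) (f_unit : f 1 \is a GRing.unit).
Hypotheses (Dbar_sub : Dbar \subset Dstar q m n)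
  (Dbar_reps : complete_reps (qcoset q r1) (f @: Dstar q m n) (f @: Dbar))
  (U_reps : complete_reps (simcls n r1) Dbar U) (U1 : 1 \in U) (U2 : 2%:R \in U).

Local Notation C := (qcoset q r1).
Local Notation u := (f 1).
Local Notation Q := (q%:R : 'Z_r1).

Lemma period_leq_m : (a <= m)%N.
Proof.
have q_gt1 : (1 < q)%N by lia.
have n_gt0 : (0 < n)%N by rewrite n_def subn_gt0 -{1}(expn0 q) ltn_exp2l.
move: (dvdn_leq n_gt0 r1_dvd_n); rewrite r1_def n_def => le_r.
by rewrite -(leq_exp2l _ _ q_gt1); have := expn_gt0 q a; lia.
Qed.

Lemma simcls_eq x y : simcls n r1 x = simcls n r1 y <-> f x = f y.
Proof.
have eq_f : (f x == f y) = ((x : nat) == y %[mod r1])%N.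
  by rewrite (additive_Zp f_add x) (additive_Zp f_add y) (inj_eq (mulrI f_unit)) eqZp_nat.
split => [eq_cls|/eqP]; last by rewrite eq_f => /eqP xy; apply/setP => z; rewrite !inE xy.
have : y \in simcls n r1 x by rewrite eq_cls inE.
by rewrite inE => xy; apply/eqP; rewrite eq_f.
Qed.

Lemma classes_inj : {in U &, injective (fun e => C (f e))}.
Proof.
move=> x y xU yU /(complete_reps_inj (fun _ _ => iff_refl _) Dbar_reps).
have /subsetP sUD : U \subset Dbar by case: U_reps.
move=> /(_ (imset_f _ (sUD _ xU)) (imset_f _ (sUD _ yU))).
exact: (complete_reps_inj simcls_eq U_reps).
Qed.

Lemma classes_imset : [set C (f e) | e in U] = [set C (f e) | e in Dstar q m n].
Proof.
rewrite !(imset_comp C f) (complete_reps_imset simcls_eq U_reps).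
exact: (complete_reps_imset (fun _ _ => iff_refl _) Dbar_reps).
Qed.

Lemma f_qpow i : f (q%:R ^+ i) = u * Q ^+ i.
Proof. by rewrite -natrX (additive_Zp_natr f_add) natrX. Qed.

Lemma class_Omega1 z : z \in Omega1 q m n -> C (f z) = C u.
Proof. by case/imsetP => i _ ->; rewrite f_qpow (qcoset_mulqpow q_gt2 r1_def r1_gt1). Qed.

Lemma class_B1 z : z \in B1 q m n -> C (f z) = C (u * 2%:R).
Proof.
case/imsetP => i _ ->; rewrite -natrX -natrM (additive_Zp_natr f_add) natrM natrX mulrA.
exact: (qcoset_mulqpow q_gt2 r1_def r1_gt1).
Qed.

Lemma class_B2 i j : (i <= j)%N ->
  C (f (q%:R ^+ i + q%:R ^+ j)) = C (u * (1 + Q ^+ ((j - i) %% a))).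
Proof.
move=> ij; rewrite f_add !f_qpow -(qpow_modn q_gt2 r1_def r1_gt1).
rewrite -[RHS](qcoset_mulqpow q_gt2 r1_def r1_gt1 _ i) -mulrA mulrDl mul1r -exprD subnK //.
by rewrite mulrDr.
Qed.

Lemma class_1Dqpow_neq k : C (u * (1 + Q ^+ k)) != C u.
Proof.
rewrite -[X in _ != C X](mulr1 u) (qcosetMl q_gt2 r1_def r1_gt1) //.
exact: (qcoset_1Dqpow_neq1 q_gt2 r1_def r1_gt1).
Qed.

Lemma U_setD_B2 : U :\: B2 q m n = [set 1; 2%:R].
Proof.
have /subsetP sUD : U \subset Dstar q m n.
  by apply: subset_trans Dbar_sub; case: U_reps.
apply/setP => y; rewrite !inE; apply/idP/idP => [/andP [yB yU]|/orP [] /eqP ->]; last 2 first.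
- by rewrite (B2_notin_small (x := 1) q_gt2 n_def) ?U1.
- by rewrite (B2_notin_small (x := 2) q_gt2 n_def) ?U2.
move: (sUD _ yU); rewrite /Dstar !inE (negbTE yB) orbF => /orP [yO|yB1].
  by rewrite (classes_inj yU U1) ?eqxx // (class_Omega1 yO).
by rewrite (classes_inj yU U2) ?eqxx ?orbT // (class_B1 yB1) (additive_Zp_natr f_add).
Qed.

Lemma card_U_classes_B2 : #|U| = (2 + #|[set C (f e) | e in U :&: B2 q m n]|)%N.
Proof.
have one_neq_two : (1 : 'Z_n) != 2%:R.
  apply: contraNneq (class_1Dqpow_neq 0) => one_two.
  by rewrite expr0 -[1 + 1]/(2%:R) -(additive_Zp_natr f_add) -one_two.
rewrite (card_in_imset (sub_in2 _ classes_inj)); last by move=> x /setIP [].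
by rewrite -(cardsID (B2 q m n) U) U_setD_B2 cards2 one_neq_two addnC.
Qed.

Lemma classes_U_B2 :
  [set C (f e) | e in U :&: B2 q m n] = [set C (u * (1 + Q ^+ k)) | k : 'I_a & (0 < k)%N].
Proof.
have class_2 : C (f 2%:R) = C (u * (1 + Q ^+ 0)) by rewrite (additive_Zp_natr f_add) expr0.
apply/setP => S; apply/imsetP/imsetP => [[e /setIP [eU eB] ->]|[k]].
  have [[i j]] := imsetP eB; rewrite inE /= => ij e_def.
  have ka : ((j - i) %% a < a)%N by rewrite ltn_pmod ?(period_gt0 r1_def r1_gt1).
  exists (Ordinal ka); last by rewrite e_def class_B2 // ltnW.
  rewrite inE /= lt0n; apply: contraNneq (B2_notin_small (x := 2) q_gt2 n_def isT) => k0.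
  by rewrite -(classes_inj eU U2) // class_2 e_def class_B2 ?(ltnW ij) //= k0.
rewrite inE => k_gt0 ->.
have km : (k < m)%N := leq_trans (ltn_ord k) period_leq_m.
have bB : q%:R ^+ 0 + q%:R ^+ k \in B2 q m n.
  by apply/imsetP; exists (Ordinal m_gt0, Ordinal km); rewrite ?inE /=.
have /imsetP [y yU class_y] : C (f (q%:R ^+ 0 + q%:R ^+ k)) \in [set C (f e) | e in U].
  by rewrite classes_imset (imset_f (fun e => C (f e))) // /Dstar inE bB orbT.
rewrite class_B2 // subn0 modn_small // in class_y.
exists y; last by [].
rewrite inE yU /=; apply: contraT => yB.
have : y \in U :\: B2 q m n by rewrite inE yB yU.
rewrite U_setD_B2 => /set2P [] y_def; move: class_y; rewrite y_def => /eqP.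
  by move=> /eqP eq_u; move: (class_1Dqpow_neq k); rewrite -eq_u eqxx.
rewrite class_2 (qcosetMl q_gt2 r1_def r1_gt1) // => /eqP eq_cls.
have ka := ltn_ord k.
by have := qcoset_1Dqpow_inj q_gt2 r1_def r1_gt1 ka (period_gt0 r1_def r1_gt1) eq_cls; lia.
Qed.

End ClassesOfDstar.

Theorem mainTheorem5 (q m n r1 r2 a : nat)
  (Hq : prime_power q) (Hq2 : (2 < q)%N) (Hm : (1 <= m)%N)
  (Hn : n = (q ^ m - 1)%N) (Hr : n = (r1 * r2)%N)
  (Hr1 : (1 < r1)%N) (Hr2 : (1 < r2)%N) (Hcop : coprime r1 r2)
  (Ha : r1 = (q ^ a - 1)%N)
  (T : 'Z_n -> 'Z_r1 * 'Z_r2)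
  (HTadd : forall x y, T (x + y) = T x + T y) (HTbij : bijective T)
  (Dbar U : {set 'Z_n})
  (HDbar : suitable q n r1 r2 T (Dstar q m n) Dbar)
  (H1D : 1 \in Dbar) (H2D : 2%:R \in Dbar)
  (HU : complete_reps (simcls n r1) Dbar U)
  (H1U : 1 \in U) (H2U : 2%:R \in U) :
  #|U| = (2 + #|[set qcoset q r1 (T e).1 | e in U :&: B2 q m n]|)%N /\
  (2 + #|[set qcoset q r1 (T e).1 | e in U :&: B2 q m n]|)%N = (2 + a %/ 2)%N.
Proof.
pose f z := (T z).1.
have f_add x y : f (x + y) = f x + f y by rewrite /f HTadd.
have f_unit : f 1 \is a GRing.unit.
  by apply: additive_Zp_unit f_add _; case: HTbij => T' _ TT'; exists (T' (1, 0)); rewrite /f TT'.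
have r1_dvd_n : (r1 %| n)%N by rewrite Hr dvdn_mulr.
case: HDbar => Dbar_sub [_ [_ Dbar_reps]]; rewrite -!imset_comp in Dbar_reps.
split; first exact: (card_U_classes_B2 Hq2 Hn Ha Hr1 f_add f_unit Dbar_sub Dbar_reps HU H1U H2U).
rewrite (classes_U_B2 Hq2 Hm Hn Ha Hr1 r1_dvd_n f_add f_unit Dbar_sub Dbar_reps HU H1U H2U).
by rewrite (card_qcoset_1Dqpow Hq2 Ha Hr1 f_unit).
Qed.
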